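(* Let $E$ be an Adams connected, strictly unital $A_\infty$-algebra (with Adams grading), whose unit spans the summand $k=E^0_0$. (a) If $E\cong k\oplus E^1_{-1}\oplus(E^2_{-3}\oplus E^2_{-4})\oplus E^3_{-6}\oplus E^4_{-7}$ as a $\mathbb{Z}^2$-graded vector space, then $m_n=0$ for $n\ne2,3,4$. (b) If $E\cong k\oplus E^1_{-1}\oplus(E^2_{-2}\oplus E^2_{-3})\oplus E^3_{-4}\oplus E^4_{-5}$, then $m_n=0$ for $n\neq2,3$. (c) If $E\cong k\oplus E^1_{-1}\oplus E^2_{-2}\oplus E^3_{-3}\oplus E^4_{-4}$, then $m_n=0$ for $n\ne2$.
   Context: An $A_\infty$-algebra with Adams grading over a field $k$ is a bigraded vector space $E=\bigoplus_{p\in\mathbb{Z},i\in\mathbb{Z}}E^p_i$ with $k$-linear maps $m_n:E^{\otimes n}\to E$ ($n\ge1$) of bidegree $(2-n,0)$ satisfying, for all $n\ge1$, the Stasheff identities $\sum(-1)^{r+st}m_{r+1+t}(\mathrm{id}^{\otimes r}\otimes m_s\otimes\mathrm{id}^{\otimes t})=0$, the sum over $n=r+s+t$ with $r,t\ge0$, $s\ge1$ (Koszul sign rule applies on elements). It is strictly unital if it has an element $1$ that is a unit for $m_2$ and $m_n(a_1,\dots,a_n)=0$ for $n\neq2$ whenever some $a_i=1$. Writing $E_i=\bigoplus_pE^p_i$, $E$ is Adams connected if $E_0=k$, either $E=\bigoplus_{i\ge0}E_i$ or $E=\bigoplus_{i\le0}E_i$, and each $E_i$ is finite-dimensional. *)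

From HB Require Import structures.
From mathcomp Require Import all_boot all_order all_algebra.
Set Implicit Arguments. Unset Strict Implicit. Unset Printing Implicit Defensive.
Import Order.TTheory GRing.Theory Num.Theory.
Local Open Scope ring_scope.

(* A Z^2-graded k-vector space E = (+)_{p,i} E^p_i is modelled as a k-vector
   space V (the total space) together with a family of subspaces
   G p i = E^p_i (p = cohomological degree, i = Adams degree) such that V is
   their internal direct sum.
   The family (m_n)_{n>=1}, m_n : E^{(x)n} -> E, is modelled by one function
   m : seq V -> V, where m_n is the restriction of m to lists of length n
   (a linear map on E^{(x)n} is the same as a multilinear map on E^n).
   m [::] is unused junk. *)

Section Defs.
Variables (k : fieldType) (V : lmodType k).

Definition bigraded_decomp (G : int -> int -> V -> Prop) : Prop :=
  (forall p i, G p i 0 /\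
     (forall (a : k) (x y : V), G p i x -> G p i y -> G p i (a *: x + y))) /\
  (forall x : V, exists (s : seq (int * int)) (c : int * int -> V),
      (forall d, G d.1 d.2 (c d)) /\ x = \sum_(d <- s) c d) /\
  (forall (s : seq (int * int)) (c : int * int -> V),
      uniq s -> (forall d, G d.1 d.2 (c d)) -> \sum_(d <- s) c d = 0 ->
      forall d, d \in s -> c d = 0).

Definition multilinear (m : seq V -> V) : Prop :=
  forall (a b : seq V) (c : k) (u v : V),
    m (a ++ (c *: u + v) :: b) = c *: m (a ++ u :: b) + m (a ++ v :: b).

Definition homogeneous (G : int -> int -> V -> Prop)
    (xs : seq V) (ds : seq (int * int)) : Prop :=
  size ds = size xs /\
  forall j, (j < size xs)%N ->
    G (nth (0, 0) ds j).1 (nth (0, 0) ds j).2 (nth 0 xs j).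

Definition graded_mult (G : int -> int -> V -> Prop) (m : seq V -> V) : Prop :=
  forall xs ds, (0 < size xs)%N -> homogeneous G xs ds ->
    G (\sum_(d <- ds) d.1 + 2 - (size xs)%:Z) (\sum_(d <- ds) d.2) (m xs).

(* Left-hand side of the n-th Stasheff identity evaluated on a homogeneous
   tensor x_1 (x) ... (x) x_n (n = size xs), with x_j of bidegree ds_j:
   sum over n = r + s + t, s >= 1, of
   (-1)^(r + s t) m_{r+1+t}(id^r (x) m_s (x) id^t)(x_1 (x) ... (x) x_n),
   where the Koszul rule gives the extra sign (-1)^{(2-s)(|x_1|+...+|x_r|)},
   |x_j| being the cohomological degree (first coordinate). *)
Definition stasheff_lhs (m : seq V -> V) (xs : seq V) (ds : seq (int * int))
    : V :=
  let n := size xs in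
  \sum_(r < n.+1) \sum_(s < n.+1 | (0 < s)%N && (r + s <= n)%N)
     let P : int := \sum_(d <- take r ds) d.1 in
     ((-1) ^+ (r + s * (n - r - s) + s * absz P)%N)
       *: m (take r xs ++ m (take s (drop r xs)) :: drop (r + s) xs).

Definition stasheff (G : int -> int -> V -> Prop) (m : seq V -> V) : Prop :=
  forall xs ds, (0 < size xs)%N -> homogeneous G xs ds ->
    stasheff_lhs m xs ds = 0.

Definition Ainf_algebra (G : int -> int -> V -> Prop) (m : seq V -> V) : Prop :=
  [/\ bigraded_decomp G, multilinear m, graded_mult G m & stasheff G m].

Definition strictly_unital (G : int -> int -> V -> Prop) (m : seq V -> V)
    (one : V) : Prop :=
  [/\ G 0 0 one,
      forall x, m [:: one; x] = x /\ m [:: x; one] = x &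
      forall xs, size xs <> 2%N -> one \in xs -> m xs = 0].

Definition in_adams (G : int -> int -> V -> Prop) (i : int) (x : V) : Prop :=
  exists (s : seq int) (c : int -> V), (forall p, G p i (c p)) /\
    x = \sum_(p <- s) c p.

Definition adams_connected (G : int -> int -> V -> Prop) (one : V) : Prop :=
  [/\ (forall p x, p <> 0 -> G p 0 x -> x = 0),
      one != 0 /\ (forall x, G 0 0 x -> exists c : k, x = c *: one),
      (forall p i x, 0 < i -> G p i x -> x = 0) \/
      (forall p i x, i < 0 -> G p i x -> x = 0) &
      forall i, exists b : seq V, forall x, in_adams G i x ->
        exists a : 'I_(size b) -> k, x = \sum_(j < size b) a j *: b`_j].

Definition supported_in (G : int -> int -> V -> Prop) (S : seq (int * int))
    : Prop :=
  forall p i x, (p, i) \notin S -> G p i x -> x = 0.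

Definition mult_vanish_outside (m : seq V -> V) (N : seq nat) : Prop :=
  forall xs : seq V, (0 < size xs)%N -> size xs \notin N -> m xs = 0.

End Defs.

From HB Require Import structures.
From mathcomp Require Import all_boot all_order all_algebra.
From mathcomp Require Import zify.

Set Implicit Arguments.
Unset Strict Implicit.
Unset Printing Implicit Defensive.
Import Order.TTheory GRing.Theory Num.Theory.
Local Open Scope ring_scope.

(* By multilinearity it suffices to
   show m_n = 0 on homogeneous arguments, where its value lies in E^P_I for
   the bidegree (P, I) prescribed by the grading.  Each support hypothesis
   puts (P, I) outside the support S for the excluded n: for n = 1 because
   each Adams degree of S occurs in a single cohomological degree while m_1
   raises only the latter, and for larger n because a weight a p + b i that
   is bounded on S is pushed below its minimum by the shift (2 - n, 0). *)

Lemma inj_in_of_uniq_map (T1 T2 : eqType) (f : T1 -> T2) (s : seq T1) :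
  uniq (map f s) -> {in s &, injective f}.
Proof.
elim: s => //= x s IHs /andP[fx_notin uniq_fs] y z.
rewrite !inE => /predU1P[-> | ys] /predU1P[-> | zs] // fyz.
- by move: fx_notin; rewrite fyz map_f.
- by move: fx_notin; rewrite -fyz map_f.
- exact: IHs.
Qed.

Definition mult_degree (ds : seq (int * int)) : int * int :=
  (\sum_(d <- ds) d.1 + 2 - (size ds)%:Z, \sum_(d <- ds) d.2).

Lemma mult_degree1_notin (S : seq (int * int)) d :
  uniq (map snd S) -> d \in S -> mult_degree [:: d] \notin S.
Proof.
case: d => p i uniq_S Spi; apply/negP => Sp1i.
have := inj_in_of_uniq_map uniq_S Sp1i Spi.
by rewrite /mult_degree !big_seq1 /= => /(_ erefl) []; lia.
Qed.

Lemma weight_sum_le (S : seq (int * int)) (a b hi : int) ds :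
  {in S, forall d, a * d.1 + b * d.2 <= hi} -> all (mem S) ds ->
  a * (\sum_(d <- ds) d.1) + b * (\sum_(d <- ds) d.2) <= hi * (size ds)%:Z.
Proof.
move=> le_hi; elim: ds => [|d ds IHds] /=; first by rewrite !big_nil !mulr0 addr0.
move=> /andP[Sd Sds]; have := le_hi d Sd; have := IHds Sds.
rewrite !big_cons /=; nia.
Qed.

(* The weight of [mult_degree ds] is at most [hi * size ds + a * (2 - size ds)]. *)
Lemma mult_degree_notin_of_weight (S : seq (int * int)) (a b lo hi : int) ds :
  {in S, forall d, lo <= a * d.1 + b * d.2 <= hi} -> all (mem S) ds ->
  2 * a + (hi - a) * (size ds)%:Z < lo -> mult_degree ds \notin S.
Proof.
move=> bdS Sds lt_lo; apply/negP => /bdS /andP[+ _]; rewrite /mult_degree /=.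
have : a * (\sum_(d <- ds) d.1) + b * (\sum_(d <- ds) d.2) <= hi * (size ds)%:Z.
  by apply: weight_sum_le Sds => d /bdS /andP[].
move: lt_lo; move: (\sum_(d <- ds) d.1) (\sum_(d <- ds) d.2) (size ds) => P I n.
lia.
Qed.

Section MultilinearVanishing.
Variables (k : fieldType) (V : lmodType k).
Variables (G : int -> int -> V -> Prop) (m : seq V -> V).
Hypothesis decG : bigraded_decomp G.
Hypothesis mlin : multilinear m.

Lemma multilinear_zero_arg a b : m (a ++ 0 :: b) = 0.
Proof.
have := mlin a b 1 0 0; rewrite !scale1r addr0 => /esym/eqP.
by rewrite -subr_eq0 addrK => /eqP.
Qed.

Lemma multilinear_sum_arg a b (I : Type) (s : seq I) (c : I -> V) :
  m (a ++ (\sum_(d <- s) c d) :: b) = \sum_(d <- s) m (a ++ c d :: b).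
Proof.
elim: s => [|d s IHs]; first by rewrite !big_nil multilinear_zero_arg.
by rewrite !big_cons -IHs -{1}[c d]scale1r mlin scale1r.
Qed.

Lemma multilinear_homogeneous_arg a b :
  (forall p i u, G p i u -> m (a ++ u :: b) = 0) -> forall x, m (a ++ x :: b) = 0.
Proof.
move=> m0 x; have [s [c [Gc ->]]] := decG.2.1 x.
by rewrite multilinear_sum_arg big1 // => d _; apply: m0 (Gc d).
Qed.

Lemma homogeneous_rcons xs ds p i u :
  homogeneous G xs ds -> G p i u -> homogeneous G (rcons xs u) (rcons ds (p, i)).
Proof.
case=> sz_ds hom_xs Gu; split=> [|j]; first by rewrite !size_rcons sz_ds.
rewrite size_rcons ltnS leq_eqVlt => /predU1P[->|lt_j].
  by rewrite !nth_rcons sz_ds ltnn eqxx.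
by rewrite !nth_rcons sz_ds lt_j; apply: hom_xs.
Qed.

Lemma multilinear_vanish_on_support (S : seq (int * int)) n :
  supported_in G S ->
  (forall xs ds, size xs = n -> homogeneous G xs ds ->
     all (mem S) ds -> m xs = 0) ->
  forall xs, size xs = n -> m xs = 0.
Proof.
move=> suppS m0.
suff m0_cat b a ds : homogeneous G a ds -> all (mem S) ds ->
    (size a + size b)%N = n -> m (a ++ b) = 0.
  by move=> xs sz_xs; apply: (m0_cat xs [::] [::]) => //; split=> // -[].
elim: b a ds => [|x b IHb] a ds hom_a Sds sz_ab.
  by rewrite cats0; apply: (m0 a ds) => //; rewrite -sz_ab addn0.
apply: multilinear_homogeneous_arg => p i u Gu.
have [Spi | nSpi] := boolP ((p, i) \in S); last first.
  by rewrite (suppS p i u nSpi Gu) multilinear_zero_arg.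
rewrite -cat_rcons; apply: (IHb _ (rcons ds (p, i))).
- exact: homogeneous_rcons.
- by rewrite all_rcons Sds andbT; apply: Spi.
- by rewrite size_rcons addSnnS.
Qed.

Hypothesis degm : graded_mult G m.

Lemma mult_vanish_outside_of_degree (S : seq (int * int)) (N : seq nat) :
  supported_in G S ->
  (forall ds, all (mem S) ds -> (0 < size ds)%N -> size ds \notin N ->
     mult_degree ds \notin S) ->
  mult_vanish_outside m N.
Proof.
move=> suppS degS xs xs_gt0 xsN.
apply: (multilinear_vanish_on_support suppS _ (erefl (size xs))) => ys ds sz_ys hom Sds.
have [sz_ds _] := hom.
have ys_gt0 : (0 < size ys)%N by rewrite sz_ys.
apply: suppS (degm ys_gt0 hom); rewrite -sz_ds.
by apply: degS; rewrite // sz_ds sz_ys.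
Qed.

Lemma mult_vanish_outside_of_weight (S : seq (int * int)) (N : seq nat)
    (a b lo hi : int) :
  supported_in G S -> uniq (map snd S) ->
  {in S, forall d, lo <= a * d.1 + b * d.2 <= hi} ->
  (forall n : nat, (1 < n)%N -> n \notin N -> 2 * a + (hi - a) * n%:Z < lo) ->
  mult_vanish_outside m N.
Proof.
move=> suppS uniq_S bdS ltN; apply: (mult_vanish_outside_of_degree suppS).
move=> [|d [|d' ds]] // Sds _ dsN.
  by apply: mult_degree1_notin; rewrite // -(andbT (d \in S)).
exact: mult_degree_notin_of_weight bdS Sds (ltN _ _ dsN).
Qed.

End MultilinearVanishing.

Theorem lemma3p2 (k : fieldType) (V : lmodType k)
    (G : int -> int -> V -> Prop) (m : seq V -> V) (one : V) :
  Ainf_algebra G m -> strictly_unital G m one -> adams_connected G one ->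
  [/\ supported_in G [:: (0, 0); (1, -1); (2, -3); (2, -4); (3, -6); (4, -7)] ->
        mult_vanish_outside m [:: 2; 3; 4]%N,
      supported_in G [:: (0, 0); (1, -1); (2, -2); (2, -3); (3, -4); (4, -5)] ->
        mult_vanish_outside m [:: 2; 3]%N &
      supported_in G [:: (0, 0); (1, -1); (2, -2); (3, -3); (4, -4)] ->
        mult_vanish_outside m [:: 2]%N].
Proof.
case=> decG mlin degm _ _ _; have vanish := mult_vanish_outside_of_weight decG mlin degm.
split=> suppS.
- apply: (vanish _ _ 2 1 0 1 suppS) => //; first exact/allP.
  by move=> n; rewrite !inE; lia.
- apply: (vanish _ _ 1 1 (-1) 0 suppS) => //; first exact/allP.
  by move=> n; rewrite !inE; lia.
- apply: (vanish _ _ 1 1 0 0 suppS) => //; first exact/allP.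
  by move=> n; rewrite !inE; lia.
Qed.
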